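(* Let $H_1,H_2\in(0,1)$ and let $B^1_{H_1},B^2_{H_2}$ be independent fractional Brownian motions. The process $B^1_{H_1}(|B^2_{H_2}(t)|^{1/H_1})$, $t>0$, has density $$q(x,t)=\frac{1}{\pi t^{H_2}}K_0\!\left(\frac{|x|}{t^{H_2}}\right),\qquad x\neq0,$$ and $q$ satisfies $$\frac{\partial q}{\partial t}=-H_2\,t^{2H_2-1}\left(2\frac{\partial^2q}{\partial x^2}+x\frac{\partial^3 q}{\partial x^3}\right),\qquad x\neq0,\ t>0.$$
   Context: A fractional Brownian motion $B_H$ with Hurst index $H\in(0,1)$ is a centered Gaussian process with covariance $\frac12(|t|^{2H}+|s|^{2H}-|t-s|^{2H})$; in particular $B_H(t)\sim N(0,t^{2H})$. For independent processes $X$ and $Y\ge0$, $X(Y(t))$ has density $\int_0^\infty f_X(x,s)f_Y(s,t)ds$. $K_0$ is the modified Bessel function of the second kind of order 0. *)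

From Stdlib Require Import Reals Lra ClassicalEpsilon.
Open Scope R_scope.

Definition gauss (v x : R) : R := / sqrt (2 * PI * v) * exp (- (x * x) / (2 * v)).

Lemma gauss_cont (v : R) : continuity (gauss v).
Proof.
  intro x; unfold gauss.
  apply continuity_pt_mult; [apply continuity_pt_const; intros ? ?; reflexivity|].
  apply (continuity_pt_comp (fun y => - (y * y) / (2 * v)) exp).
  - unfold Rdiv. apply continuity_pt_mult.
    + apply continuity_pt_opp, continuity_pt_mult; apply derivable_continuous_pt, derivable_pt_id.
    + apply continuity_pt_const; intros ? ?; reflexivity.
  - apply derivable_continuous_pt, derivable_pt_exp.
Qed.

Definition gauss_RI (v a b : R) (h : a <= b) : Riemann_integrable (gauss v) a b :=
  @continuity_implies_RiemannInt (gauss v) a b h (fun x _ => gauss_cont v x).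

Definition gauss_int (v a b : R) : R :=
  match Rle_dec a b with
  | left h => RiemannInt (gauss_RI v a b h)
  | right h => - RiemannInt (gauss_RI v b a (Rlt_le b a (Rnot_le_lt a b h)))
  end.

(* density of B_H(s) ~ N(0, s^{2H}) at x, for s > 0 *)
Definition fbm_density (H s x : R) : R := gauss (Rpower s (2 * H)) x.

(* CDF of Y(t) = |B^2_{H2}(t)|^{1/H1} at s > 0:
   P(|B^2(t)| <= s^{H1}) = int_{-s^{H1}}^{s^{H1}} density of N(0,t^{2 H2}) *)
Definition cdf_Y (H1 H2 t s : R) : R :=
  gauss_int (Rpower t (2 * H2)) (- Rpower s H1) (Rpower s H1).

Definition int_0_inf (f : R -> R) (l : R) : Prop :=
  (forall a b, 0 < a -> a <= b -> inhabited (Riemann_integrable f a b)) /\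
  (forall eps, 0 < eps -> exists d, 0 < d /\ exists M, 0 < M /\
     forall a b (pr : Riemann_integrable f a b),
       0 < a -> a < d -> M < b -> Rabs (RiemannInt pr - l) < eps).

Definition K0 (z : R) : R :=
  epsilon (inhabits 0) (fun l => int_0_inf (fun u => exp (- z * cosh u)) l).

Definition q (H2 x t : R) : R :=
  / (PI * Rpower t H2) * K0 (Rabs x / Rpower t H2).

(* Write r = s^H1 and sigma = t^H2. The integrand of the subordination formula is
   (2 H1 / s) / (2 PI sigma) * exp (- x^2 / (2 r^2) - r^2 / (2 sigma^2)), and this exponent is
   - (|x| / sigma) cosh u for u = ln (r^2 / (|x| sigma)). Changing variables to u turns the
   integral over s > 0 into 1 / (2 PI sigma) times the integral of exp (- (|x| / sigma) cosh u)
   over the whole line, i.e. q = K0 (|x| / sigma) / (PI sigma).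
   For the PDE, K0 is differentiated under the integral sign:
   K0^(k) z = int_0^oo (- cosh u)^k exp (- z cosh u) du, all integrands being dominated by
   C exp (- z u / 2). Integrating the exact derivative of - sinh u cosh u exp (- z cosh u) gives
   K0 + z K0' - 2 K0'' - z K0''' = 0, which is the PDE after the scaling z = |x| / t^H2. *)

From Stdlib Require Import Reals Lra Psatz ClassicalEpsilon FunctionalExtensionality.
From Coquelicot Require Import Coquelicot.
Open Scope R_scope.

Lemma ex_RInt_of_continuous (g : R -> R) a b : (forall u, continuous g u) -> ex_RInt g a b.
Proof. intros Hg; apply (@ex_RInt_continuous R_CompleteNormedModule); intros; apply Hg. Qed.

Lemma is_lim_exp_decay (c d : R) : 0 < d -> is_lim (fun W => c * exp (- d * W)) p_infty 0.
Proof.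
  intros Hd.
  replace (Finite 0) with (Rbar_mult c 0) by (simpl; f_equal; ring).
  apply is_lim_scal_l, (is_lim_comp exp (fun W => - d * W) p_infty 0 m_infty).
  - apply is_lim_exp_m.
  - apply is_lim_spec; intros M; exists (- M / d); intros W HW.
    apply (Rmult_lt_compat_l d) in HW; [|lra].
    replace (d * (- M / d)) with (- M) in HW by (field; lra); lra.
  - exists 0; intros; discriminate.
Qed.

Lemma is_lim_abs_le (F : R -> R) (l B : R) :
  is_lim F p_infty l -> (forall W, 0 <= W -> Rabs (F W) <= B) -> Rabs l <= B.
Proof.
  intros HF HB.
  apply (is_lim_le_loc (fun W => Rabs (F W)) (fun _ => B) p_infty (Rabs l) B).
  - exists 0; intros W HW; apply HB; lra.
  - apply (is_lim_Rabs F p_infty l HF).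
  - apply is_lim_const.
Qed.

Lemma ball_R_Rabs (x e y : R) : ball x e y <-> Rabs (y - x) < e.
Proof. reflexivity. Qed.

Lemma continuous_of_ex_derive (f : R -> R) (x : R) : ex_derive f x -> continuous f x.
Proof. apply (@ex_derive_continuous R_AbsRing R_NormedModule). Qed.

Lemma RInt_correct_of_continuous (g : R -> R) a b :
  (forall u, continuous g u) -> is_RInt g a b (RInt g a b).
Proof. intros Hg. apply (@RInt_correct R_CompleteNormedModule), ex_RInt_of_continuous, Hg. Qed.

Lemma exp_le (x y : R) : x <= y -> exp x <= exp y.
Proof. intros [Hlt | ->]; [apply Rlt_le, exp_increasing, Hlt | apply Rle_refl]. Qed.

Lemma Rabs_exp_sub_1_sub_le (y : R) : Rabs (exp y - 1 - y) <= y * y * exp (Rabs y).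
Proof.
  pose proof (exp_ineq1_le y). pose proof (exp_ineq1_le (- y)).
  assert (Hprod : exp y * exp (- y) = 1) by (rewrite <- exp_plus, Rplus_opp_r; apply exp_0).
  assert (Hy1 : exp y * (1 - y) <= 1)
    by (rewrite <- Hprod; apply Rmult_le_compat_l; [apply Rlt_le, exp_pos | lra]).
  rewrite Rabs_pos_eq by lra.
  destruct (Rle_dec 0 y) as [Hy | Hy].
  - rewrite Rabs_pos_eq by lra. nra.
  - rewrite Rabs_left by lra.
    assert (exp y - 1 - y <= - y * (1 - exp y)) by nra.
    assert (- y * (1 - exp y) <= y * y) by nra.
    assert (0 <= y * y) by nra.
    assert (y * y <= y * y * exp (- y)) by nra.
    lra.
Qed.

Lemma cosh_pos (u : R) : 0 < cosh u.
Proof. unfold cosh. pose proof (exp_pos u); pose proof (exp_pos (- u)); lra. Qed.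

Lemma le_cosh (u : R) : 0 <= u -> u <= cosh u.
Proof.
  intros Hu. unfold cosh.
  assert (Hsq : exp u = exp (u / 2) * exp (u / 2)) by (rewrite <- exp_plus; f_equal; lra).
  pose proof (exp_ineq1_le (u / 2)). pose proof (exp_pos (- u)).
  assert (exp (u / 2) * exp (u / 2) >= (1 + u / 2) * (1 + u / 2))
    by (apply Rle_ge, Rmult_le_compat; lra).
  assert ((1 + u / 2) * (1 + u / 2) >= 2 * u)
    by (pose proof (Rle_0_sqr (1 - u / 2)); unfold Rsqr in *; lra).
  rewrite Hsq. lra.
Qed.

Lemma pow_le_exp (m : nat) (e : R) : 0 < e ->
  exists C, forall c, 0 <= c -> c ^ m <= C * exp (e * c).
Proof.
  intros He. pose proof (pos_INR m) as Hm.
  set (A := (INR m + 1) / e). assert (HA : 0 < A) by (apply Rdiv_lt_0_compat; lra).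
  exists (A ^ m). intros c Hc.
  set (v := c / A). assert (Hv : 0 <= v) by (apply Rdiv_le_0_compat; lra).
  replace c with (A * v) at 1 by (unfold v; field; lra).
  apply (Rle_trans _ ((A * exp v) ^ m)).
  - apply pow_incr; split; [nra |]. pose proof (exp_ineq1_le v). nra.
  - rewrite Rpow_mult_distr. apply Rmult_le_compat_l; [apply pow_le; lra |].
    rewrite <- (Rpower_pow m (exp v) (exp_pos v)). unfold Rpower. rewrite ln_exp.
    apply exp_le. unfold v, A.
    replace (INR m * (c / ((INR m + 1) / e))) with (e * c * (INR m / (INR m + 1))) by (field; lra).
    assert (INR m / (INR m + 1) <= 1)
      by (apply (Rmult_le_reg_r (INR m + 1)); [lra | field_simplify; lra]).
    assert (0 <= e * c) by nra. nra.
Qed.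

Lemma cosh_sq_sub_sinh_sq (u : R) : cosh u * cosh u - sinh u * sinh u = 1.
Proof.
  unfold cosh, sinh.
  assert (exp u * exp (- u) = 1) by (rewrite <- exp_plus, Rplus_opp_r; apply exp_0).
  nra.
Qed.

Lemma Rabs_sinh_le_cosh (u : R) : Rabs (sinh u) <= cosh u.
Proof.
  unfold sinh, cosh. pose proof (exp_pos u); pose proof (exp_pos (- u)).
  apply Rabs_le; lra.
Qed.

Lemma is_derive_of_quadratic_remainder (f : R -> R) (x l delta B : R) : 0 < delta ->
  (forall h, Rabs h <= delta -> Rabs (f (x + h) - f x - h * l) <= B * (h * h)) ->
  is_derive f x l.
Proof.
  intros Hdelta Hrem. apply is_derive_Reals. intros eps Heps.
  assert (Hpos : 0 < Rmin delta (eps / (Rabs B + 1))).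
  { apply Rmin_pos; [lra | apply Rdiv_lt_0_compat; [lra | pose proof (Rabs_pos B); lra]]. }
  exists (mkposreal _ Hpos). intros h Hh0 Hh; simpl in Hh.
  pose proof (Rabs_pos B) as HB.
  assert (Hh_delta : Rabs h <= delta) by (pose proof (Rmin_l delta (eps / (Rabs B + 1))); lra).
  assert (Hh_eps : Rabs h < eps / (Rabs B + 1))
    by (pose proof (Rmin_r delta (eps / (Rabs B + 1))); lra).
  assert (Habs : 0 < Rabs h) by (apply Rabs_pos_lt, Hh0).
  assert (HBh : (Rabs B + 1) * Rabs h < eps).
  { apply (Rmult_lt_compat_l (Rabs B + 1)) in Hh_eps; [| lra].
    replace ((Rabs B + 1) * (eps / (Rabs B + 1))) with eps in Hh_eps by (field; lra).
    exact Hh_eps. }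
  specialize (Hrem h Hh_delta).
  replace ((f (x + h) - f x) / h - l) with ((f (x + h) - f x - h * l) / h) by (field; exact Hh0).
  unfold Rdiv; rewrite Rabs_mult, Rabs_inv.
  apply (Rmult_lt_reg_r (Rabs h)); [exact Habs |].
  rewrite Rmult_assoc, Rinv_l, Rmult_1_r by lra.
  replace (h * h) with (Rabs h * Rabs h) in Hrem
    by (rewrite <- Rabs_mult; apply Rabs_pos_eq, Rle_0_sqr).
  pose proof (Rle_abs B). nra.
Qed.

(** * Exponentially dominated improper integrals *)

Lemma RInt_exp_decay (C d a b : R) : 0 < d ->
  RInt (fun u => C * exp (- d * u)) a b = C / d * (exp (- d * a) - exp (- d * b)).
Proof.
  intros Hd. apply is_RInt_unique.
  replace (C / d * (exp (- d * a) - exp (- d * b)))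
    with (minus (- C / d * exp (- d * b)) (- C / d * exp (- d * a)))
    by (unfold minus, plus, opp; simpl; field; lra).
  apply (is_RInt_derive (fun u => - C / d * exp (- d * u))).
  - intros u _; auto_derive; [easy | field; lra].
  - intros u _; apply continuous_of_ex_derive; auto_derive; easy.
Qed.

Section ExpDominated.
Variables (g : R -> R) (C d : R).
Hypotheses (g_cont : forall u, continuous g u) (d_pos : 0 < d)
  (g_dom : forall u, 0 <= u -> Rabs (g u) <= C * exp (- d * u)).

Lemma exp_dominated_const_nonneg : 0 <= C / d.
Proof.
  apply Rdiv_le_0_compat; [| exact d_pos].
  pose proof (g_dom 0 (Rle_refl 0)) as H0. rewrite Rmult_0_r, exp_0 in H0.
  pose proof (Rabs_pos (g 0)); lra.
Qed.

Lemma abs_RInt_exp_dominated a b : 0 <= a <= b -> Rabs (RInt g a b) <= C / d * exp (- d * a).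
Proof.
  intros Hab. pose proof exp_dominated_const_nonneg.
  apply (Rle_trans _ (RInt (fun u => C * exp (- d * u)) a b)).
  - apply (Rle_trans _ _ _ (abs_RInt_le g a b (proj2 Hab) (ex_RInt_of_continuous g a b g_cont))).
    apply RInt_le; [lra | | | intros u Hu; apply g_dom; lra].
    + apply ex_RInt_of_continuous; intro u.
      apply continuous_comp; [apply g_cont | apply continuous_Rabs].
    + apply ex_RInt_of_continuous; intro u; apply continuous_of_ex_derive; auto_derive; easy.
  - rewrite RInt_exp_decay by exact d_pos.
    pose proof (exp_pos (- d * b)). nra.
Qed.

Lemma ex_lim_RInt_exp_dominated : exists l : R, is_lim (fun W => RInt g 0 W) p_infty l.
Proof.
  apply (filterlim_locally_cauchy (F := Rbar_locally p_infty) (fun W => RInt g 0 W)).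
  intros eps.
  destruct (proj2 (is_lim_spec _ _ _) (is_lim_exp_decay (C / d) d d_pos) eps) as [M HM].
  exists (fun W => Rmax M 0 < W); split; [now exists (Rmax M 0) |].
  assert (tail : forall u v, Rmax M 0 < u <= v -> Rabs (RInt g u v) < eps).
  { intros u v Huv. pose proof (Rmax_l M 0); pose proof (Rmax_r M 0).
    specialize (HM u ltac:(lra)).
    rewrite Rminus_0_r, Rabs_pos_eq in HM
      by (pose proof (exp_pos (- d * u)); pose proof exp_dominated_const_nonneg; nra).
    eapply Rle_lt_trans; [apply abs_RInt_exp_dominated; lra | exact HM]. }
  intros u v Hu Hv; apply ball_R_Rabs.
  rewrite <- (RInt_Chasles g 0 u v) by apply ex_RInt_of_continuous, g_cont.
  unfold plus; simpl. rewrite Rplus_minus_l.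
  destruct (Rle_dec u v) as [Huv | Huv]; [apply tail; lra |].
  rewrite <- (opp_RInt_swap g) by apply ex_RInt_of_continuous, g_cont.
  unfold opp; simpl; rewrite Rabs_Ropp. apply tail; lra.
Qed.

Lemma abs_lim_RInt_exp_dominated (l : R) :
  is_lim (fun W => RInt g 0 W) p_infty l -> Rabs l <= C / d.
Proof.
  intros Hl; apply (is_lim_abs_le _ _ _ Hl); intros W HW.
  replace (C / d) with (C / d * exp (- d * 0)) by (rewrite Rmult_0_r, exp_0; ring).
  apply abs_RInt_exp_dominated; lra.
Qed.

End ExpDominated.

Lemma is_lim_RInt_plus_scal (f g : R -> R) (a lf lg : R) :
  (forall u, continuous f u) -> (forall u, continuous g u) ->
  is_lim (fun W => RInt f 0 W) p_infty lf -> is_lim (fun W => RInt g 0 W) p_infty lg ->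
  is_lim (fun W => RInt (fun u => f u + a * g u) 0 W) p_infty (lf + a * lg).
Proof.
  intros Hf Hg Hlf Hlg.
  apply (is_lim_ext (fun W => RInt f 0 W + a * RInt g 0 W)).
  - intros W. symmetry. apply is_RInt_unique.
    apply (is_RInt_plus f (fun u => a * g u)); [apply RInt_correct_of_continuous, Hf |].
    apply (is_RInt_scal g); apply RInt_correct_of_continuous, Hg.
  - apply (is_lim_plus' _ _ _ _ _ Hlf (is_lim_scal_l _ a _ _ Hlg)).
Qed.

Lemma int_0_inf_of_primitive (g Phi : R -> R) (lo hi : R) :
  (forall s, 0 < s -> is_derive Phi s (g s)) ->
  (forall s, 0 < s -> continuous g s) ->
  filterlim Phi (at_right 0) (locally lo) ->
  is_lim Phi p_infty hi ->
  int_0_inf g (hi - lo).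
Proof.
  intros HPhi Hg Hlo Hhi.
  assert (Hint : forall a b, 0 < a <= b -> is_RInt g a b (Phi b - Phi a)).
  { intros a b Hab. apply (is_RInt_derive Phi g); intros x Hx;
      rewrite Rmin_left, Rmax_right in Hx by lra; [apply HPhi | apply Hg]; lra. }
  split.
  { intros a b Ha Hab. constructor. apply ex_RInt_Reals_0.
    exists (Phi b - Phi a). apply Hint; lra. }
  intros eps Heps.
  assert (Heps2 : 0 < eps / 2) by lra.
  destruct (proj1 (filterlim_locally _ _) Hlo (mkposreal _ Heps2)) as [delta Hdelta].
  destruct (proj2 (is_lim_spec _ _ _) Hhi (mkposreal _ Heps2)) as [M HM].
  exists (Rmin delta 1). split; [apply Rmin_pos; [apply cond_pos | lra] |].
  exists (Rmax M 1). split; [pose proof (Rmax_r M 1); lra |].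
  intros a b pr Ha Had Hb.
  pose proof (Rmin_l delta 1); pose proof (Rmin_r delta 1).
  pose proof (Rmax_l M 1); pose proof (Rmax_r M 1).
  rewrite <- RInt_Reals, (is_RInt_unique _ _ _ _ (Hint a b ltac:(lra))).
  assert (Ha' : Rabs (Phi a - lo) < eps / 2).
  { apply ball_R_Rabs, Hdelta; [apply ball_R_Rabs; rewrite Rminus_0_r, Rabs_pos_eq |]; simpl; lra. }
  assert (Hb' : Rabs (Phi b - hi) < eps / 2) by (apply HM; lra).
  apply Rabs_def2 in Ha'; apply Rabs_def2 in Hb'. apply Rabs_def1; lra.
Qed.

Lemma int_0_inf_of_is_lim_RInt (g : R -> R) (l : R) :
  (forall u, continuous g u) -> is_lim (fun W => RInt g 0 W) p_infty l -> int_0_inf g l.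
Proof.
  intros Hg Hl. rewrite <- (Rminus_0_r l).
  assert (HPhi : forall s, is_derive (fun W => RInt g 0 W) s (g s)).
  { intros s. apply (is_derive_RInt g _ 0); [| apply Hg].
    apply filter_forall; intros b; apply RInt_correct_of_continuous, Hg. }
  apply int_0_inf_of_primitive with (fun W => RInt g 0 W); auto.
  replace 0 with (RInt g 0 0) at 2 by exact (RInt_point 0 g).
  apply (filterlim_filter_le_1 (F := locally 0)).
  - intros P [e He]. exists e. intros y Hy _. apply He, Hy.
  - apply continuous_of_ex_derive. exists (g 0). apply HPhi.
Qed.

Lemma int_0_inf_unique (g : R -> R) (l1 l2 : R) : int_0_inf g l1 -> int_0_inf g l2 -> l1 = l2.
Proof.
  intros [Hri H1] [_ H2].
  apply Rminus_diag_uniq, Rabs_eq_0, Rle_antisym; [| apply Rabs_pos].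
  apply le_epsilon; intros eps Heps.
  destruct (H1 (eps / 2) ltac:(lra)) as [d1 [Hd1 [M1 [HM1 HH1]]]].
  destruct (H2 (eps / 2) ltac:(lra)) as [d2 [Hd2 [M2 [HM2 HH2]]]].
  set (a := Rmin (Rmin d1 d2) 1 / 2). set (b := Rmax M1 M2 + 1).
  assert (Ha : 0 < a /\ a < d1 /\ a < d2 /\ a <= 1 / 2).
  { unfold a. pose proof (Rmin_l (Rmin d1 d2) 1); pose proof (Rmin_r (Rmin d1 d2) 1).
    pose proof (Rmin_l d1 d2); pose proof (Rmin_r d1 d2).
    pose proof (Rmin_pos (Rmin d1 d2) 1 (Rmin_pos d1 d2 Hd1 Hd2) Rlt_0_1). lra. }
  assert (Hb : M1 < b /\ M2 < b /\ 1 < b)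
    by (unfold b; pose proof (Rmax_l M1 M2); pose proof (Rmax_r M1 M2); lra).
  destruct (Hri a b ltac:(lra) ltac:(lra)) as [pr].
  specialize (HH1 a b pr ltac:(lra) ltac:(lra) ltac:(lra)).
  specialize (HH2 a b pr ltac:(lra) ltac:(lra) ltac:(lra)).
  apply Rabs_def2 in HH1; apply Rabs_def2 in HH2. apply Rabs_le; lra.
Qed.

(** * The derivatives of K0 *)

Definition K0_integrand (k : nat) (z u : R) : R := (- cosh u) ^ k * exp (- z * cosh u).

(* For [z <= 0] the limit does not exist and the value is junk. *)
Definition K0_deriv (k : nat) (z : R) : R :=
  real (Lim (fun W => RInt (K0_integrand k z) 0 W) p_infty).

Lemma continuous_K0_integrand (k : nat) (z u : R) : continuous (K0_integrand k z) u.
Proof. apply continuous_of_ex_derive. unfold K0_integrand. auto_derive. easy. Qed.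

Lemma Rabs_K0_integrand (k : nat) (z u : R) :
  Rabs (K0_integrand k z u) = cosh u ^ k * exp (- z * cosh u).
Proof.
  unfold K0_integrand. rewrite Rabs_mult, <- RPow_abs, Rabs_Ropp.
  rewrite (Rabs_pos_eq (cosh u)), (Rabs_pos_eq (exp _)); [reflexivity | |].
  - apply Rlt_le, exp_pos.
  - apply Rlt_le, cosh_pos.
Qed.

Lemma cosh_pow_exp_dominated (m : nat) (e : R) : 0 < e ->
  exists C, forall u, 0 <= u -> cosh u ^ m * exp (- e * cosh u) <= C * exp (- (e / 2) * u).
Proof.
  intros He. destruct (pow_le_exp m (e / 2)) as [C HC]; [lra |].
  exists C. intros u Hu.
  pose proof (cosh_pos u). pose proof (le_cosh u Hu).
  assert (HC0 : 0 <= C).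
  { pose proof (HC 0 (Rle_refl 0)) as HC0. rewrite Rmult_0_r, exp_0, Rmult_1_r in HC0.
    destruct m; simpl in HC0; lra. }
  apply (Rle_trans _ (C * exp (e / 2 * cosh u) * exp (- e * cosh u))).
  - apply Rmult_le_compat_r; [apply Rlt_le, exp_pos | apply HC; lra].
  - rewrite Rmult_assoc, <- exp_plus. apply Rmult_le_compat_l; [exact HC0 |].
    apply exp_le. nra.
Qed.

Lemma is_lim_K0_deriv (k : nat) (z : R) : 0 < z ->
  is_lim (fun W => RInt (K0_integrand k z) 0 W) p_infty (K0_deriv k z).
Proof.
  intros Hz. destruct (cosh_pow_exp_dominated k z Hz) as [C HC].
  destruct (ex_lim_RInt_exp_dominated (K0_integrand k z) C (z / 2)) as [l Hl].
  - apply continuous_K0_integrand.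
  - lra.
  - intros u Hu. rewrite Rabs_K0_integrand. apply HC, Hu.
  - unfold K0_deriv. rewrite (is_lim_unique _ _ _ Hl). exact Hl.
Qed.

Lemma K0_integrand_remainder_le (k : nat) (z h u : R) : 0 < z -> Rabs h <= z / 2 ->
  Rabs (K0_integrand k (z + h) u - K0_integrand k z u - h * K0_integrand (S k) z u)
  <= h * h * (cosh u ^ (S (S k)) * exp (- (z / 2) * cosh u)).
Proof.
  intros Hz Hh. unfold K0_integrand. set (c := cosh u). pose proof (cosh_pos u) as Hc; fold c in Hc.
  replace ((- c) ^ k * exp (- (z + h) * c) - (- c) ^ k * exp (- z * c)
           - h * ((- c) ^ S k * exp (- z * c)))
    with ((- c) ^ k * exp (- z * c) * (exp (- h * c) - 1 - - h * c))
    by (replace (- (z + h) * c) with (- z * c + - h * c) by ring; rewrite exp_plus; simpl; ring).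
  rewrite !Rabs_mult, <- RPow_abs, Rabs_Ropp, (Rabs_pos_eq c), (Rabs_pos_eq (exp _))
    by (apply Rlt_le; first [apply exp_pos | exact Hc]).
  apply (Rle_trans _ (c ^ k * exp (- z * c) * ((- h * c) * (- h * c) * exp (Rabs (- h * c))))).
  - apply Rmult_le_compat_l; [apply Rmult_le_pos; [apply pow_le; lra | apply Rlt_le, exp_pos] |].
    apply Rabs_exp_sub_1_sub_le.
  - rewrite Rabs_mult, Rabs_Ropp, (Rabs_pos_eq c) by lra.
    replace (c ^ k * exp (- z * c) * (- h * c * (- h * c) * exp (Rabs h * c)))
      with (h * h * (c ^ S (S k) * (exp (Rabs h * c) * exp (- z * c)))) by (simpl; ring).
    rewrite <- exp_plus.
    apply Rmult_le_compat_l; [apply Rle_0_sqr |].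
    apply Rmult_le_compat_l; [apply pow_le; lra |].
    apply exp_le.
    assert (Rabs h * c <= z / 2 * c) by (apply Rmult_le_compat_r; lra).
    lra.
Qed.

Lemma is_derive_K0_deriv (k : nat) (z : R) : 0 < z ->
  is_derive (K0_deriv k) z (K0_deriv (S k) z).
Proof.
  intros Hz. destruct (cosh_pow_exp_dominated (S (S k)) (z / 2)) as [C HC]; [lra |].
  apply (is_derive_of_quadratic_remainder _ _ _ (z / 2) (C / (z / 2 / 2))); [lra |].
  intros h Hh.
  (* The remainder integrand, written in the shape expected by [is_lim_RInt_plus_scal]. *)
  assert (Hlim : is_lim
    (fun W => RInt (fun u => (K0_integrand k (z + h) u + (-1) * K0_integrand k z u)
                             + (- h) * K0_integrand (S k) z u) 0 W) p_infty
    ((K0_deriv k (z + h) + (-1) * K0_deriv k z) + (- h) * K0_deriv (S k) z)).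
  { assert (Hzh : 0 < z + h) by (apply Rabs_le_between in Hh; lra).
    apply is_lim_RInt_plus_scal; [| apply continuous_K0_integrand | | apply is_lim_K0_deriv, Hz].
    - intros u. apply continuous_of_ex_derive. unfold K0_integrand. auto_derive. easy.
    - apply is_lim_RInt_plus_scal; try apply continuous_K0_integrand; apply is_lim_K0_deriv; lra. }
  replace (K0_deriv k (z + h) - K0_deriv k z - h * K0_deriv (S k) z)
    with ((K0_deriv k (z + h) + (-1) * K0_deriv k z) + (- h) * K0_deriv (S k) z) by ring.
  replace (C / (z / 2 / 2) * (h * h)) with (h * h * C / (z / 2 / 2)) by (field; lra).
  apply (abs_lim_RInt_exp_dominated (fun u => (K0_integrand k (z + h) u
      + (-1) * K0_integrand k z u) + (- h) * K0_integrand (S k) z u) (h * h * C) (z / 2 / 2));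
    [| lra | | exact Hlim].
  - intros u. apply continuous_of_ex_derive. unfold K0_integrand. auto_derive. easy.
  - intros u Hu.
    replace (K0_integrand k (z + h) u + -1 * K0_integrand k z u + - h * K0_integrand (S k) z u)
      with (K0_integrand k (z + h) u - K0_integrand k z u - h * K0_integrand (S k) z u) by ring.
    eapply Rle_trans; [apply K0_integrand_remainder_le; lra |].
    rewrite (Rmult_assoc (h * h) C). apply Rmult_le_compat_l; [apply Rle_0_sqr | apply HC, Hu].
Qed.

Lemma K0_deriv_ode (z : R) : 0 < z ->
  K0_deriv 0 z + z * K0_deriv 1 z - 2 * K0_deriv 2 z - z * K0_deriv 3 z = 0.
Proof.
  intros Hz.
  set (comb := fun u => ((K0_integrand 0 z u + z * K0_integrand 1 z u)
                        + (-2) * K0_integrand 2 z u) + (- z) * K0_integrand 3 z u).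
  (* [Phi] is a primitive of [comb] vanishing at 0 and at +oo. *)
  set (Phi := fun u => - (sinh u * cosh u * exp (- z * cosh u))).
  assert (HPhi : forall u, is_derive Phi u (comb u)).
  { intros u. unfold Phi, comb, K0_integrand. auto_derive; [easy |].
    apply Rminus_diag_uniq.
    transitivity (exp (- z * cosh u) * (1 - z * cosh u)
                  * (cosh u * cosh u - sinh u * sinh u - 1)); [simpl; ring |].
    rewrite cosh_sq_sub_sinh_sq; ring. }
  assert (Hcont : forall u, continuous comb u).
  { intros u; apply continuous_of_ex_derive; unfold comb, K0_integrand; auto_derive; easy. }
  assert (HRInt : forall W, RInt comb 0 W = Phi W).
  { intros W. apply is_RInt_unique.
    replace (Phi W) with (minus (Phi W) (Phi 0))
      by (unfold minus, plus, opp, Phi; simpl; rewrite sinh_0; ring).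
    apply (is_RInt_derive Phi comb); intros; [apply HPhi | apply Hcont]. }
  assert (Hzero : is_lim (fun W => RInt comb 0 W) p_infty 0).
  { destruct (cosh_pow_exp_dominated 2 z Hz) as [C HC].
    apply (is_lim_ext Phi); [intros W; symmetry; apply HRInt |].
    apply (is_lim_le_le_loc (fun W => - C * exp (- (z / 2) * W))
                            (fun W => C * exp (- (z / 2) * W)));
      [| apply is_lim_exp_decay; lra | apply is_lim_exp_decay; lra].
    exists 0. intros W HW.
    enough (Rabs (Phi W) <= C * exp (- (z / 2) * W))
      by (rewrite Ropp_mult_distr_l_reverse; apply Rabs_le_between; assumption).
    eapply Rle_trans; [| apply HC; lra].
    unfold Phi. rewrite Rabs_Ropp, !Rabs_mult, (Rabs_pos_eq (cosh W)), (Rabs_pos_eq (exp _))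
      by (apply Rlt_le; first [apply exp_pos | apply cosh_pos]).
    simpl. rewrite Rmult_1_r.
    apply Rmult_le_compat_r; [apply Rlt_le, exp_pos |].
    apply Rmult_le_compat_r; [apply Rlt_le, cosh_pos | apply Rabs_sinh_le_cosh]. }
  assert (Hcomb : is_lim (fun W => RInt comb 0 W) p_infty
    (((K0_deriv 0 z + z * K0_deriv 1 z) + (-2) * K0_deriv 2 z) + (- z) * K0_deriv 3 z)).
  { assert (Hk : forall k, is_lim (fun W => RInt (K0_integrand k z) 0 W) p_infty (K0_deriv k z))
      by (intros k; apply is_lim_K0_deriv, Hz).
    unfold comb.
    apply is_lim_RInt_plus_scal; [| apply continuous_K0_integrand | | apply Hk].
    { intros u; apply continuous_of_ex_derive; unfold K0_integrand; auto_derive; easy. }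
    apply is_lim_RInt_plus_scal; [| apply continuous_K0_integrand | | apply Hk].
    { intros u; apply continuous_of_ex_derive; unfold K0_integrand; auto_derive; easy. }
    apply is_lim_RInt_plus_scal; try apply continuous_K0_integrand; apply Hk. }
  apply is_lim_unique in Hzero; apply is_lim_unique in Hcomb.
  rewrite Hzero in Hcomb. injection Hcomb. lra.
Qed.

Lemma K0_eq_K0_deriv (z : R) : 0 < z -> K0 z = K0_deriv 0 z.
Proof.
  intros Hz.
  assert (Hint : int_0_inf (fun u => exp (- z * cosh u)) (K0_deriv 0 z)).
  { replace (fun u => exp (- z * cosh u)) with (K0_integrand 0 z)
      by (apply functional_extensionality; intros u; unfold K0_integrand; simpl; ring).
    apply int_0_inf_of_is_lim_RInt; [apply continuous_K0_integrand | apply is_lim_K0_deriv, Hz]. }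
  apply (int_0_inf_unique (fun u => exp (- z * cosh u))); [| exact Hint].
  unfold K0. apply epsilon_spec. exists (K0_deriv 0 z). exact Hint.
Qed.

Lemma Derive_K0_deriv (k : nat) (z : R) : 0 < z -> Derive (K0_deriv k) z = K0_deriv (S k) z.
Proof. intros Hz. apply is_derive_unique, is_derive_K0_deriv, Hz. Qed.

Lemma ex_derive_K0_deriv (k : nat) (z : R) : 0 < z -> ex_derive (K0_deriv k) z.
Proof. intros Hz. exists (K0_deriv (S k) z). apply is_derive_K0_deriv, Hz. Qed.

(** * Derivatives of the density *)

Lemma locally_sign (x : R) : x <> 0 ->
  locally x (fun y => sign y = sign x /\ Rabs y = sign x * y).
Proof.
  intros Hx. exists (mkposreal _ (Rabs_pos_lt x Hx)). intros y Hy.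
  change R in y. change (Rabs (y - x) < Rabs x) in Hy.
  destruct (Rlt_or_le 0 x) as [Hpos | Hneg].
  - rewrite (Rabs_pos_eq x) in Hy by lra. apply Rabs_def2 in Hy.
    rewrite !sign_eq_1, Rabs_pos_eq by lra. split; ring.
  - rewrite (Rabs_left x) in Hy by lra. apply Rabs_def2 in Hy.
    rewrite !sign_eq_m1, Rabs_left by lra. split; ring.
Qed.

Section Density_PDE.
Variable H2 : R.

Definition q_x_deriv (j : nat) (x t : R) : R :=
  / (PI * Rpower t H2) * (sign x ^ j * K0_deriv j (Rabs x / Rpower t H2) / Rpower t H2 ^ j).

Definition q_t_deriv (x t : R) : R :=
  - (H2 * Rpower t (H2 - 1)) / (PI * Rpower t H2 * Rpower t H2)
  * (K0_deriv 0 (Rabs x / Rpower t H2)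
     + Rabs x / Rpower t H2 * K0_deriv 1 (Rabs x / Rpower t H2)).

Lemma q_eq_q_x_deriv_0 (x t : R) : x <> 0 -> q H2 x t = q_x_deriv 0 x t.
Proof.
  intros Hx. unfold q, q_x_deriv.
  assert (Hs : 0 < Rpower t H2) by apply exp_pos.
  rewrite K0_eq_K0_deriv; [simpl; field; split; [lra | apply PI_neq0] |].
  apply Rdiv_lt_0_compat; [apply Rabs_pos_lt, Hx | apply exp_pos].
Qed.

Lemma is_derive_q_x_deriv (j : nat) (x t : R) : x <> 0 ->
  is_derive (fun y => q_x_deriv j y t) x (q_x_deriv (S j) x t).
Proof.
  intros Hx. set (s := Rpower t H2). assert (Hs : 0 < s) by apply exp_pos.
  set (e := sign x).
  apply (is_derive_ext_loc
    (fun y => / (PI * s) * (e ^ j * K0_deriv j (e * y / s) / s ^ j))).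
  { apply (filter_imp (fun y => sign y = e /\ Rabs y = e * y)); [| apply locally_sign, Hx].
    intros y [Hsy Hay]. unfold q_x_deriv. fold s. rewrite Hsy, Hay. reflexivity. }
  assert (Hex : e * x = Rabs x)
    by (destruct (locally_sign x Hx) as [eps Heps]; symmetry; apply Heps, ball_center).
  assert (Hz : 0 < e * x * / s)
    by (rewrite Hex; apply Rdiv_lt_0_compat; [apply Rabs_pos_lt, Hx | exact Hs]).
  auto_derive.
  - apply ex_derive_K0_deriv, Hz.
  - rewrite Derive_K0_deriv by exact Hz.
    unfold q_x_deriv. fold s. fold e. rewrite <- Hex. unfold Rdiv. simpl. field.
    split; [apply pow_nonzero; lra | split; [lra | apply PI_neq0]].
Qed.

Lemma is_derive_q_x (x t : R) : x <> 0 ->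
  is_derive (fun y => q H2 y t) x (q_x_deriv 1 x t).
Proof.
  intros Hx. apply (is_derive_ext_loc (fun y => q_x_deriv 0 y t)).
  - apply (filter_imp (fun y => y <> 0)); [| apply open_neq, Hx].
    intros y Hy. symmetry. apply q_eq_q_x_deriv_0, Hy.
  - apply is_derive_q_x_deriv, Hx.
Qed.

Lemma is_derive_q_t (x t : R) : x <> 0 -> 0 < t ->
  is_derive (fun s => q H2 x s) t (q_t_deriv x t).
Proof.
  intros Hx Ht.
  assert (Hk : forall s, 0 < Rabs x / exp (H2 * ln s))
    by (intros s; apply Rdiv_lt_0_compat; [apply Rabs_pos_lt, Hx | apply exp_pos]).
  apply (is_derive_ext (fun s => / (PI * exp (H2 * ln s)) * K0_deriv 0 (Rabs x / exp (H2 * ln s)))).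
  { intros s. unfold q, Rpower. rewrite K0_eq_K0_deriv by apply Hk. reflexivity. }
  pose proof (exp_pos (H2 * ln t)). pose proof PI_RGT_0.
  auto_derive.
  - repeat split; try lra; try nra. apply ex_derive_K0_deriv, Hk.
  - rewrite Derive_K0_deriv by apply Hk.
    unfold q_t_deriv, Rpower.
    replace ((H2 - 1) * ln t) with (H2 * ln t + - ln t) by ring.
    rewrite exp_plus, exp_Ropp, exp_ln by exact Ht.
    unfold Rdiv. field. lra.
Qed.

Lemma q_pde (x t : R) : x <> 0 ->
  q_t_deriv x t = - H2 * Rpower t (2 * H2 - 1) * (2 * q_x_deriv 2 x t + x * q_x_deriv 3 x t).
Proof.
  intros Hx. set (s := Rpower t H2). assert (Hs : 0 < s) by apply exp_pos.
  set (k := Rabs x / s).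
  assert (Hkpos : 0 < k) by (apply Rdiv_lt_0_compat; [apply Rabs_pos_lt, Hx | exact Hs]).
  assert (Hsign : sign x * sign x = 1).
  { destruct (Rlt_or_le 0 x); [rewrite sign_eq_1 | rewrite sign_eq_m1]; lra. }
  assert (Habs : x * sign x = Rabs x).
  { destruct (Rlt_or_le 0 x);
      [rewrite sign_eq_1, Rabs_pos_eq | rewrite sign_eq_m1, Rabs_left]; lra. }
  assert (Hpow : Rpower t (2 * H2 - 1) = Rpower t (H2 - 1) * s).
  { unfold s. rewrite <- Rpower_plus. f_equal. ring. }
  pose proof (K0_deriv_ode k Hkpos) as Hode.
  unfold q_t_deriv, q_x_deriv. fold s. fold k. rewrite Hpow.
  replace (x * (/ (PI * s) * (sign x ^ 3 * K0_deriv 3 k / s ^ 3)))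
    with (x * sign x * (sign x * sign x) * (/ (PI * s) * (K0_deriv 3 k / s ^ 3)))
    by (simpl; unfold Rdiv; ring).
  replace (sign x ^ 2) with (sign x * sign x) by (simpl; ring).
  rewrite Habs, Hsign.
  replace (Rabs x) with (k * s) by (unfold k; field; lra).
  replace (K0_deriv 0 k) with (2 * K0_deriv 2 k + k * K0_deriv 3 k - k * K0_deriv 1 k) by lra.
  simpl. field. split; [lra | apply PI_neq0].
Qed.
End Density_PDE.

(** * The subordination integral *)

Lemma continuous_gauss (v x : R) : continuous (gauss v) x.
Proof. apply continuity_pt_filterlim, gauss_cont. Qed.

Lemma gauss_even (v x : R) : gauss v (- x) = gauss v x.
Proof. unfold gauss. rewrite Rmult_opp_opp. reflexivity. Qed.

Lemma gauss_int_RInt (v a b : R) : gauss_int v a b = RInt (gauss v) a b.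
Proof.
  unfold gauss_int. destruct (Rle_dec a b); rewrite <- RInt_Reals; [reflexivity |].
  apply (opp_RInt_swap (V := R_CompleteNormedModule)), ex_RInt_of_continuous, continuous_gauss.
Qed.

Lemma is_derive_cdf_Y (H1 H2 t s : R) : 0 < s ->
  is_derive (cdf_Y H1 H2 t) s
    (2 * H1 * Rpower s (H1 - 1) * gauss (Rpower t (2 * H2)) (Rpower s H1)).
Proof.
  intros Hs. set (g := gauss (Rpower t (2 * H2))).
  assert (HR : is_derive (fun y => Rpower y H1) s (H1 * Rpower s (H1 - 1)))
    by (apply is_derive_Reals, derivable_pt_lim_power, Hs).
  apply (is_derive_ext (fun y => RInt g (- Rpower y H1) (Rpower y H1))).
  { intros y. unfold cdf_Y. rewrite gauss_int_RInt. reflexivity. }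
  replace (2 * H1 * Rpower s (H1 - 1) * g (Rpower s H1)) with
    (minus (scal (H1 * Rpower s (H1 - 1)) (g (Rpower s H1)))
           (scal (- (H1 * Rpower s (H1 - 1))) (g (- Rpower s H1))))
    by (unfold g; rewrite gauss_even; unfold minus, plus, opp, scal; simpl; unfold mult; simpl;
        ring).
  apply (is_derive_RInt_bound_comp g (RInt g) (fun y => - Rpower y H1) (fun y => Rpower y H1)).
  - apply filter_forall; intros [a b]; apply RInt_correct_of_continuous, continuous_gauss.
  - apply continuous_gauss.
  - apply continuous_gauss.
  - apply (is_derive_opp (fun y => Rpower y H1)), HR.
  - exact HR.
Qed.

Lemma RInt_even_opp (g : R -> R) (W : R) : (forall u, continuous g u) ->
  (forall u, g (- u) = g u) -> RInt g 0 (- W) = - RInt g 0 W.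
Proof.
  intros Hg Heven.
  assert (Hopp := is_RInt_comp_opp g 0 W _ (RInt_correct_of_continuous g (- 0) (- W) Hg)).
  rewrite Ropp_0 in Hopp.
  rewrite <- (is_RInt_unique _ _ _ _ Hopp).
  rewrite <- (RInt_opp (V := R_CompleteNormedModule)) by apply ex_RInt_of_continuous, Hg.
  apply RInt_ext; intros u _. rewrite Heven. reflexivity.
Qed.

Lemma is_lim_ln_affine_p_infty (a b : R) : 0 < a -> is_lim (fun s => a * ln s + b) p_infty p_infty.
Proof.
  intros Ha. apply is_lim_spec; intros M.
  destruct (proj2 (is_lim_spec _ _ _) is_lim_ln_p ((M - b) / a)) as [N HN].
  exists N. intros s Hs. specialize (HN s Hs).
  apply (Rmult_lt_compat_l a) in HN; [| exact Ha].
  replace (a * ((M - b) / a)) with (M - b) in HN by (field; lra). lra.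
Qed.

Lemma filterlim_ln_affine_at_right_0 (a b : R) : 0 < a ->
  filterlim (fun s => a * ln s + b) (at_right 0) (Rbar_locally m_infty).
Proof.
  intros Ha P [M HM].
  exists (mkposreal _ (exp_pos ((M - b) / a))). intros s Hs Hpos. apply HM.
  change (Rabs (s - 0) < exp ((M - b) / a)) in Hs.
  rewrite Rminus_0_r, Rabs_pos_eq in Hs by lra.
  apply ln_increasing in Hs; [| exact Hpos]. rewrite ln_exp in Hs.
  apply (Rmult_lt_compat_l a) in Hs; [| exact Ha].
  replace (a * ((M - b) / a)) with (M - b) in Hs by (field; lra). lra.
Qed.

Section Subordination.
Variables (H1 H2 t x : R).
Hypotheses (H1_pos : 0 < H1) (t_pos : 0 < t) (x_neq0 : x <> 0).

Let sigma := Rpower t H2.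
Let k := Rabs x / sigma.
Let A := / (2 * PI * sigma).
Let w (s : R) := 2 * H1 * ln s - ln (Rabs x * sigma).
Let P (W : R) := RInt (K0_integrand 0 k) 0 W.

Let sigma_pos : 0 < sigma.
Proof. apply exp_pos. Qed.

Let k_pos : 0 < k.
Proof. apply Rdiv_lt_0_compat; [apply Rabs_pos_lt, x_neq0 | exact sigma_pos]. Qed.

(* The two Gaussian exponents add up to - k cosh (w s), and w' s = 2 H1 / s. *)
Lemma subordinated_density_eq (s : R) : 0 < s ->
  fbm_density H1 s x * (2 * H1 * Rpower s (H1 - 1) * gauss (Rpower t (2 * H2)) (Rpower s H1))
  = A * (K0_integrand 0 k (w s) * (2 * H1 / s)).
Proof.
  intros Hs. unfold fbm_density, gauss, K0_integrand, A, k, w. simpl.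
  set (r := Rpower s H1). assert (Hr : 0 < r) by apply exp_pos.
  pose proof sigma_pos. pose proof PI_RGT_0.
  assert (Hax : 0 < Rabs x) by (apply Rabs_pos_lt, x_neq0).
  assert (Hs2 : Rpower s (2 * H1) = r * r)
    by (unfold r; rewrite <- Rpower_plus; f_equal; ring).
  assert (Ht2 : Rpower t (2 * H2) = sigma * sigma)
    by (unfold sigma; rewrite <- Rpower_plus; f_equal; ring).
  assert (Hr1 : Rpower s (H1 - 1) = r / s)
    by (unfold r, Rminus, Rdiv; rewrite Rpower_plus, Rpower_Ropp, Rpower_1 by exact Hs;
        reflexivity).
  assert (Hxx : Rabs x * Rabs x = x * x) by (rewrite <- Rabs_mult; apply Rabs_pos_eq, Rle_0_sqr).
  assert (Hw : exp (2 * H1 * ln s - ln (Rabs x * sigma)) = r * r / (Rabs x * sigma)).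
  { unfold Rminus. rewrite exp_plus, exp_Ropp, exp_ln by nra.
    change (exp (2 * H1 * ln s)) with (Rpower s (2 * H1)). rewrite Hs2. reflexivity. }
  assert (Hcosh : - (Rabs x / sigma) * cosh (2 * H1 * ln s - ln (Rabs x * sigma))
                  = - (x * x) / (2 * (r * r)) + - (r * r) / (2 * (sigma * sigma))).
  { unfold cosh. rewrite exp_Ropp, Hw, <- Hxx. field. lra. }
  rewrite Hs2, Ht2, Hr1, Hcosh, exp_plus.
  rewrite (sqrt_mult (2 * PI) (r * r)), (sqrt_mult (2 * PI) (sigma * sigma)) by nra.
  rewrite !sqrt_square by lra.
  assert (Hq : 0 < sqrt (2 * PI)) by (apply sqrt_lt_R0; lra).
  assert (Hq2 : sqrt (2 * PI) * sqrt (2 * PI) = 2 * PI) by (apply sqrt_def; lra).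
  replace (/ (2 * PI * sigma)) with (/ (sqrt (2 * PI) * sqrt (2 * PI) * sigma))
    by (rewrite Hq2; reflexivity).
  field. lra.
Qed.

Let is_derive_P (W : R) : is_derive P W (K0_integrand 0 k W).
Proof.
  apply (is_derive_RInt _ _ 0); [| apply continuous_K0_integrand].
  apply filter_forall; intros b; apply RInt_correct_of_continuous, continuous_K0_integrand.
Qed.

Let P_odd (W : R) : P (- W) = - P W.
Proof.
  apply RInt_even_opp; [apply continuous_K0_integrand |].
  intros u. unfold K0_integrand, cosh. rewrite Ropp_involutive, Rplus_comm. reflexivity.
Qed.

Let is_lim_P_m_infty : is_lim P m_infty (- K0_deriv 0 k).
Proof.
  apply (is_lim_ext (fun W => - P (- W))); [intros W; rewrite P_odd; apply Ropp_involutive |].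
  apply (is_lim_opp (fun W => P (- W)) m_infty (K0_deriv 0 k)).
  apply (is_lim_comp P (fun W => - W) m_infty (K0_deriv 0 k) p_infty).
  - apply is_lim_K0_deriv, k_pos.
  - apply (is_lim_opp (fun W => W) m_infty m_infty), is_lim_id.
  - exists 0; intros; discriminate.
Qed.

Lemma subordinated_density (fY : R -> R) :
  (forall s, 0 < s -> derivable_pt_lim (cdf_Y H1 H2 t) s (fY s)) ->
  int_0_inf (fun s => fbm_density H1 s x * fY s) (q H2 x t).
Proof.
  intros HfY.
  set (g := fun s => A * (K0_integrand 0 k (w s) * (2 * H1 / s))).
  assert (Hg : forall s, 0 < s -> fbm_density H1 s x * fY s = g s).
  { intros s Hs. unfold g. rewrite <- subordinated_density_eq by exact Hs. f_equal.
    rewrite <- (is_derive_unique _ _ _ (proj2 (is_derive_Reals _ _ _) (HfY s Hs))).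
    apply is_derive_unique, is_derive_cdf_Y, Hs. }
  replace (q H2 x t) with (A * K0_deriv 0 k - A * - K0_deriv 0 k)
    by (unfold q, A, k, sigma; rewrite K0_eq_K0_deriv by exact k_pos;
        field; split; [apply Rgt_not_eq, sigma_pos | apply PI_neq0]).
  apply int_0_inf_of_primitive with (Phi := fun s => A * P (w s)).
  - intros s Hs. rewrite Hg by exact Hs. apply is_derive_scal.
    replace (K0_integrand 0 k (w s) * (2 * H1 / s))
      with (scal (2 * H1 / s) (K0_integrand 0 k (w s)))
      by (unfold scal; simpl; unfold mult; simpl; ring).
    apply (is_derive_comp P w); [apply is_derive_P |].
    unfold w. auto_derive; [exact Hs | field; lra].
  - intros s Hs.
    apply (continuous_ext_loc _ g); [| apply continuous_of_ex_derive; unfold g, K0_integrand, w;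
                                   auto_derive; repeat split; lra].
    apply (filter_imp (fun y => 0 < y)); [intros y Hy; symmetry; apply Hg, Hy | apply open_gt, Hs].
  - apply (filterlim_comp _ _ _ w (fun W => A * P W) _ (Rbar_locally m_infty)).
    + apply (filterlim_ln_affine_at_right_0 (2 * H1) (- ln (Rabs x * sigma))). lra.
    + exact (is_lim_scal_l P A m_infty _ is_lim_P_m_infty).
  - apply (is_lim_comp (fun W => A * P W) w p_infty (A * K0_deriv 0 k) p_infty).
    + exact (is_lim_scal_l P A p_infty _ (is_lim_K0_deriv 0 k k_pos)).
    + apply (is_lim_ln_affine_p_infty (2 * H1) (- ln (Rabs x * sigma))). lra.
    + exists 0; intros; discriminate.
Qed.
End Subordination.

Theorem mainTheorem16 :
  forall H1 H2 : R, 0 < H1 < 1 -> 0 < H2 < 1 ->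
  (forall t : R, 0 < t ->
     forall fY : R -> R,
       (forall s : R, 0 < s -> derivable_pt_lim (cdf_Y H1 H2 t) s (fY s)) ->
       forall x : R, x <> 0 ->
         int_0_inf (fun s => fbm_density H1 s x * fY s) (q H2 x t)) /\
  (exists qx qxx qxxx qt : R -> R -> R,
     forall x t : R, x <> 0 -> 0 < t ->
       derivable_pt_lim (fun y => q H2 y t) x (qx x t) /\
       derivable_pt_lim (fun y => qx y t) x (qxx x t) /\
       derivable_pt_lim (fun y => qxx y t) x (qxxx x t) /\
       derivable_pt_lim (fun s => q H2 x s) t (qt x t) /\
       qt x t = - H2 * Rpower t (2 * H2 - 1) * (2 * qxx x t + x * qxxx x t)).
Proof.
  intros H1 H2 HH1 _. split.
  - intros t Ht fY HfY x Hx. apply subordinated_density; (lra || assumption).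
  - exists (q_x_deriv H2 1), (q_x_deriv H2 2), (q_x_deriv H2 3), (q_t_deriv H2).
    intros x t Hx Ht.
    repeat split; try apply is_derive_Reals.
    + apply is_derive_q_x, Hx.
    + apply is_derive_q_x_deriv, Hx.
    + apply is_derive_q_x_deriv, Hx.
    + apply is_derive_q_t; assumption.
    + apply q_pde, Hx.
Qed.
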